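(* Let $A$ be a set with $n$ elements. Every d-path $\alpha\in\vec P(Y^A)_{\mathbf0}^{\mathbf1}$ has the form $\alpha(t)=[c;\beta(t)]$ for all $t\in[0,1]$, for some $n$-cube $c\in Y^A[n]$ and some continuous path $\beta:[0,1]\to[0,1]^n$ with non-decreasing coordinates, $\beta(0)=(0,\dots,0)$, $\beta(1)=(1,\dots,1)$.
   Context: A precubical set ($\square$-set) $K$ is a sequence of pairwise disjoint sets $(K[n])_{n\ge0}$ with face maps $d^\varepsilon_i:K[n]\to K[n-1]$ ($1\le i\le n$, $\varepsilon\in\{0,1\}$) satisfying $d^\varepsilon_i d^\eta_j=d^\eta_{j-1}d^\varepsilon_i$ for $i<j$; bi-pointed $\square$-sets have chosen vertices $\mathbf0,\mathbf1\in K[0]$. Geometric realization: $|K|=\coprod_n K[n]\times[0,1]^n/\sim$ with $(d^\varepsilon_i c,\mathbf x)\sim(c,\delta^\varepsilon_i\mathbf x)$, where $\delta^\varepsilon_i(x_1,\dots,x_{n-1})=(x_1,\dots,x_{i-1},\varepsilon,x_i,\dots,x_{n-1})$; $[c;\mathbf x]$ is the class. A path $\alpha:[0,1]\to|K|$ is a d-path if there are $0=t_0<\dots<t_m=1$, $c_k\in K[n_k]$ and continuous $\beta_k:[t_{k-1},t_k]\to[0,1]^{n_k}$ with non-decreasing coordinates such that $\alpha(t)=[c_k;\beta_k(t)]$ on $[t_{k-1},t_k]$. $\vec P(K)_{\mathbf0}^{\mathbf1}$ is the space of d-paths from $\mathbf0$ to $\mathbf1$. $Y^A$ is the bi-pointed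 $\square$-set where $Y^A[k]$ is the set of pairs $(c,<)$ with $c:A\to\{0,*,1\}$, $|c^{-1}( * )|=k$, and $<$ a strict total order on $c^{-1}( * )$; if $c^{-1}( * )=\{a_1<\dots<a_k\}$ then $d^\varepsilon_i(c,<)=(c',<')$ where $c'(a_i)=\varepsilon$, $c'=c$ elsewhere, and $<'$ is the restriction of $<$ to $c^{-1}( * )\setminus\{a_i\}$; $\mathbf0=(\text{const}_0,\emptyset)$, $\mathbf1=(\text{const}_1,\emptyset)$. *)

From HB Require Import structures.
From mathcomp Require Import all_boot all_order all_algebra.
From mathcomp Require Import all_classical all_reals all_analysis.
From Stdlib Require Import Relations.
Set Implicit Arguments. Unset Strict Implicit. Unset Printing Implicit Defensive.
Import Order.TTheory GRing.Theory Num.Theory numFieldNormedType.Exports.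
Local Open Scope classical_set_scope.
Local Open Scope ring_scope.

(* [face i e] : K[n+1] -> K[n] is d^e_{i+1} (0-indexed i : 'I_n.+1).    *)
(* The precubical identities are not needed for any definition below.  *)
Record preCubical := PreCubical {
  cell : nat -> Type;
  face : forall n, 'I_n.+1 -> bool -> cell n.+1 -> cell n }.

(* delta^e_{i+1} : [0,1]^n -> [0,1]^{n+1}, inserting e at position i. *)
Definition delta (R : realType) n (i : 'I_n.+1) (e : bool) (x : 'I_n -> R)
  : 'I_n.+1 -> R :=
  fun j => match unlift i j with
           | None => if e then 1 else 0
           | Some j' => x j' end.

Definition pt (R : realType) (K : preCubical) :=
  {n : nat & (cell K n * ('I_n -> R))%type}.

Definition mkpt (R : realType) (K : preCubical) n (c : cell K n) (x : 'I_n -> R)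
  : pt R K := existT _ n (c, x).

Definition in_cube (R : realType) n (x : 'I_n -> R) := forall j, 0 <= x j <= 1.

Definition real_step (R : realType) (K : preCubical) (p q : pt R K) : Prop :=
  exists n (i : 'I_n.+1) (e : bool) (c : cell K n.+1) (x : 'I_n -> R),
    in_cube x /\ p = mkpt (face i e c) x /\ q = mkpt c (delta i e x).

(* equality in the geometric realization |K| *)
Definition real_eq (R : realType) (K : preCubical) : relation (pt R K) :=
  clos_refl_sym_trans _ (@real_step R K).

(* A d-path alpha : [0,1] -> |K|, represented by a choice of representatives. *)
Definition is_dpath (R : realType) (K : preCubical) (alpha : R -> pt R K) : Prop :=
  exists (m : nat) (tt : nat -> R) (ns : nat -> nat)
         (cs : forall k, cell K (ns k)) (bs : forall k, R -> 'I_(ns k) -> R),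
    [/\ tt 0%N = 0, tt m = 1, (forall k, (k < m)%N -> tt k < tt k.+1) &
      forall k, (k < m)%N ->
        [/\ (forall j, {within `[tt k, tt k.+1], continuous (fun t => bs k t j)}),
            (forall j s t, tt k <= s -> s <= t -> t <= tt k.+1 -> bs k s j <= bs k t j),
            (forall t, tt k <= t <= tt k.+1 -> in_cube (bs k t)) &
            (forall t, tt k <= t <= tt k.+1 ->
               real_eq (alpha t) (mkpt (cs k) (bs k t)))]].

Definition dpath_from_to (R : realType) (K : preCubical) (v0 v1 : cell K 0)
  (alpha : R -> pt R K) : Prop :=
  [/\ is_dpath alpha,
      real_eq (alpha 0) (mkpt v0 (fun _ => 0)) &
      real_eq (alpha 1) (mkpt v1 (fun _ => 0))].

(* The precubical set Y^A.  A k-cell is (c, s) with c : A -> {0,star,1}   *)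
(* encoded as option bool (None = star, Some false = 0, Some true = 1),    *)
(* and the strict total order on c^-1(star) = {a_1 < ... < a_k} encoded by *)
(* the injective enumeration s : 'I_k -> A, s j = a_{j+1}.              *)
Section Y.
Variable A : finType.

Definition Yvalid n (p : {ffun A -> option bool} * {ffun 'I_n -> A}) : bool :=
  injectiveb p.2 && [forall a, (p.1 a == None) == (a \in codom p.2)].

Definition Ycell n := {p : {ffun A -> option bool} * {ffun 'I_n -> A} | Yvalid p}.

Definition Yface_raw n (i : 'I_n.+1) (e : bool)
  (p : {ffun A -> option bool} * {ffun 'I_n.+1 -> A}) :=
  ([ffun a => if a == p.2 i then Some e else p.1 a],
   [ffun j : 'I_n => p.2 (lift i j)]).

Lemma Yface_ok n (i : 'I_n.+1) e (c : Ycell n.+1) : Yvalid (Yface_raw i e (val c)).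
Proof.
case: c => [[f s]] /= /andP [/injectiveP inj /forallP H].
apply/andP; split.
  by apply/injectiveP => j k; rewrite !ffunE => /inj /lift_inj.
apply/forallP => a; rewrite ffunE.
case: (a =P s i) => [->|ne].
  apply/eqP; apply/esym/negbTE/codomP => [[j]]; rewrite ffunE => /inj /eqP.
  by rewrite (negbTE (neq_lift i j)).
move: (H a) => /eqP ->; apply/eqP; apply/codomP/codomP => [[k ak]|[j aj]].
  case: (unliftP i k) => [j ek|eik]; first by exists j; rewrite ffunE -ek.
  by exfalso; apply: ne; rewrite ak eik.
by exists (lift i j); rewrite aj ffunE.
Qed.

Definition Yface n (i : 'I_n.+1) (e : bool) (c : Ycell n.+1) : Ycell n :=
  exist _ (Yface_raw i e (val c)) (Yface_ok i e c).

Definition Y : preCubical := @PreCubical Ycell Yface.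

Lemma Yvertex_ok (b : bool) :
  @Yvalid 0 ([ffun => Some b], @ffun0 _ (fun _ => Finite.sort A) (card_ord 0)).
Proof.
apply/andP; split; first by apply/injectiveP => [[]].
apply/forallP => a; rewrite ffunE /=.
have -> : codom (@ffun0 _ (fun _ => Finite.sort A) (card_ord 0)) = [::].
  by apply/size0nil; rewrite size_codom card_ord.
by [].
Qed.

Definition Yvertex (b : bool) : cell Y 0 := exist (fun p => is_true (Yvalid p)) _ (Yvertex_ok b).
Definition Y0 := Yvertex false.
Definition Y1 := Yvertex true.
End Y.

From HB Require Import structures.
From mathcomp Require Import all_boot all_order all_algebra.
From mathcomp Require Import all_classical all_reals all_analysis.
From mathcomp Require Import zify.
From Stdlib Require Import Relations.

Import Order.TTheory GRing.Theory Num.Theory numFieldNormedType.Exports.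
Set Implicit Arguments. Unset Strict Implicit. Unset Printing Implicit Defensive.
Local Open Scope classical_set_scope.
Local Open Scope ring_scope.

(* A point of |Y^A| has two invariants that are preserved by the
   identifications: its global coordinates (a function A -> [0,1]: the value of
   the cube coordinate at a starred a, and 0 or 1 elsewhere), and the list, in
   the order of its cell, of the a whose coordinate lies strictly between 0 and
   1.  Conversely, points of cubes with the same invariants are identified,
   since collapsing all coordinates equal to 0 or 1 leads to one and the same
   representative.  Along a d-path from 0 to 1 the global coordinates are
   continuous and non-decreasing from 0 to 1.  The cell orders of successive
   pieces agree on the coordinates moving at the common knot, so they merge
   into a single total order on A compatible with the interior list at every
   time.  The n-cube with every coordinate starred in this order, together with
   the global coordinates, then represents the path at every time. *)

Lemma map_lift_enum n (i : 'I_n.+1) :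
  map (lift i) (enum 'I_n) = [seq j <- enum 'I_n.+1 | j != i].
Proof.
have lt_trans m : ssrbool.transitive (T := 'I_m) (relpre val ltn).
  by move=> a b c /=; exact: ltn_trans.
have enum_sorted m : sorted (relpre val ltn) (enum 'I_m).
  by rewrite -sorted_map val_enum_ord iota_ltn_sorted.
apply: (irr_sorted_eq (lt_trans _)) => [a /=|||a]; first exact: ltnn.
- rewrite sorted_map; apply: sub_sorted (enum_sorted n) => a b /=.
  by rewrite /bump; case: leqP; case: leqP => /=; lia.
- exact: (sorted_filter (lt_trans _) _ (enum_sorted _)).
rewrite mem_filter mem_enum andbT; case: (unliftP i a) => [j ->|->].
  by rewrite lift_eqF mem_map ?mem_enum //; exact: lift_inj.
by rewrite eqxx; apply/mapP => -[j _ /eqP]; rewrite eq_liftF.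
Qed.

Lemma real_eq_invariant (R : realType) (K : preCubical) (T : Type) (f : pt R K -> T) :
  (forall p q, real_step p q -> f p = f q) -> forall p q, real_eq p q -> f p = f q.
Proof. by move=> f_step p q; elim=> [{}p {}q /f_step|//|{}p {}q _ ->|{}p {}q r _ -> _ ->]. Qed.

Section YPoints.
Variables (R : realType) (A : finType).
Implicit Types (p q : pt R (Y A)) (g : A -> R).

(* For a starred [a] the sum has exactly one term, the coordinate of [x] at [a]'s position. *)
Definition Ycoord p : A -> R :=
  let: existT k (d, x) := p in fun a =>
    if (sval d).1 a is Some b then b%:R else \sum_(j < k | (sval d).2 j == a) x j.

Definition Yorder p : seq A := let: existT _ (d, _) := p in codom (sval d).2.

Definition inner g : pred A := fun a => 0 < g a < 1.

Definition Yinterior p : seq A := [seq a <- Yorder p | inner (Ycoord p) a].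

Section Cell.
Variables (k : nat) (d : cell (Y A) k).

Lemma Ycell_inj : injective (sval d).2.
Proof. by case: d => -[f s] /= /andP [/injectiveP]. Qed.

Lemma Ycell_uniq : uniq (codom (sval d).2).
Proof. by case: d => -[f s] /= /andP []. Qed.

Lemma Ycell_star a : ((sval d).1 a == None) = (a \in codom (sval d).2).
Proof. by case: d => -[f s] /= /andP [_ /forallP /(_ a) /eqP]. Qed.

Lemma Ycoord_order (x : 'I_k -> R) j : Ycoord (mkpt d x) ((sval d).2 j) = x j.
Proof.
rewrite /= (_ : (sval d).1 _ = None); last by apply/eqP; rewrite Ycell_star codom_f.
rewrite (bigD1 j) //= big1 ?addr0 // => i /andP [/eqP /Ycell_inj -> ].
by rewrite eqxx.
Qed.

Lemma Ycoord_notin_order a : a \notin codom (sval d).2 ->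
  exists b : bool, forall x : 'I_k -> R, Ycoord (mkpt d x) a = b%:R.
Proof. by rewrite -Ycell_star /=; case: ((sval d).1 a) => // b _; exists b. Qed.

Lemma Ycoord_in01 (x : 'I_k -> R) a : in_cube x -> 0 <= Ycoord (mkpt d x) a <= 1.
Proof.
move=> x01; have [/codomP [j ->]|a_out] := boolP (a \in codom (sval d).2).
  by rewrite Ycoord_order.
by have [b ->] := Ycoord_notin_order a_out; case: b; rewrite ?lexx ?ler01.
Qed.

Lemma inner_Yorder (x : 'I_k -> R) a :
  inner (Ycoord (mkpt d x)) a -> a \in codom (sval d).2.
Proof.
rewrite /inner; apply: contraTT => /Ycoord_notin_order [b ->].
by case: b; rewrite ltxx ?andbF.
Qed.

End Cell.

Lemma Ycoord_vertex b (x : 'I_0 -> R) : Ycoord (mkpt (Yvertex A b) x) = fun=> b%:R.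
Proof. by apply: funext => a; rewrite /= ffunE. Qed.

Lemma Yinterior_vertex b (x : 'I_0 -> R) : Yinterior (mkpt (Yvertex A b) x) = [::].
Proof.
apply/eqP; rewrite -size_eq0 size_filter -leqn0.
by rewrite (leq_trans (count_size _ _)) // size_codom card_ord.
Qed.

Section Faces.
Variables (k : nat) (i : 'I_k.+1) (e : bool) (c : cell (Y A) k.+1) (x : 'I_k -> R).
Let s := (sval c).2.

Lemma Ycoord_face : Ycoord (mkpt (face i e c) x) = Ycoord (mkpt c (delta i e x)).
Proof.
apply: funext => a; rewrite /= !ffunE -/s.
have [->|a_ne] := eqVneq a (s i).
  have /= -> := Ycoord_order c (delta i e x) i.
  by rewrite /delta unlift_none; case: e.
case: ((sval c).1 a) => [b //|].
rewrite [RHS]big_mkcond (bigD1_ord i) //= eq_sym (negbTE a_ne) add0r big_mkcond.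
by apply: eq_bigr => j _; rewrite ffunE /delta liftK.
Qed.

Lemma Yinterior_face : Yinterior (mkpt (face i e c) x) = Yinterior (mkpt c (delta i e x)).
Proof.
rewrite /Yinterior Ycoord_face.
have -> : Yorder (mkpt (face i e c) x) = [seq a <- codom s | a != s i].
  rewrite /= codomE (eq_map (ffunE _)) (map_comp s (lift i)) map_lift_enum.
  rewrite [in RHS]codomE filter_map; congr map.
  by apply: eq_filter => j /=; rewrite (inj_eq (@Ycell_inj _ c)).
set g := Ycoord _; rewrite -filter_predI; apply: eq_filter => a /=.
have [->|_] := eqVneq a (s i); last by rewrite andbT.
rewrite andbF /g /inner Ycoord_order /delta unlift_none.
by case: e; rewrite ltxx ?andbF.
Qed.

End Faces.

Lemma Ycoord_real_eq p q : real_eq p q -> Ycoord p = Ycoord q.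
Proof.
apply: real_eq_invariant => _ _ [k [i [e [c [x [_ [-> ->]]]]]]].
exact: Ycoord_face.
Qed.

Lemma Yinterior_real_eq p q : real_eq p q -> Yinterior p = Yinterior q.
Proof.
apply: real_eq_invariant => _ _ [k [i [e [c [x [_ [-> ->]]]]]]].
exact: Yinterior_face.
Qed.

Definition Yreduced p : Prop := let: existT _ (_, x) := p in forall j, 0 < x j < 1.

Lemma real_eq_reduced k (d : cell (Y A) k) (x : 'I_k -> R) :
  in_cube x -> exists2 r, real_eq (mkpt d x) r & Yreduced r.
Proof.
elim: k d x => [|k IH] d x x01; first by exists (mkpt d x) => //; [exact: rst_refl | case].
have [j x_end|x_inner] := pickP (fun j => ~~ (0 < x j < 1)); last first.
  by exists (mkpt d x) => [|j]; [exact: rst_refl | apply/negbFE/x_inner].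
pose x' i := x (lift j i).
have x'01 : in_cube x' by move=> i; exact: x01.
have x_delta : delta j (x j == 1) x' = x.
  apply: funext => i; rewrite /delta; case: (unliftP j i) => [i' ->|->] //.
  case/andP: (x01 j) x_end => x0 x1; rewrite negb_and -!leNgt => /orP x_end.
  case: eqP => [-> //|x_ne1]; apply/eqP; rewrite eq_le x0.
  by case: x_end => // x_ge1; case: x_ne1; apply/eqP; rewrite eq_le x1 x_ge1.
have [r face_r r_red] := IH (face j (x j == 1) d) x' x'01.
exists r => //; apply: rst_trans face_r; apply/rst_sym/rst_step.
by exists k, j, (x j == 1), d, x'; rewrite x_delta.
Qed.

Lemma Yinterior_reduced k (d : cell (Y A) k) (x : 'I_k -> R) :
  Yreduced (mkpt d x) -> Yinterior (mkpt d x) = codom (sval d).2.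
Proof.
move=> x_red; apply/all_filterP/allP => _ /codomP [j ->].
by rewrite /inner Ycoord_order.
Qed.

Lemma Yreduced_eq p q : Yreduced p -> Yreduced q ->
  Ycoord p = Ycoord q -> Yinterior p = Yinterior q -> p = q.
Proof.
case: p q => k1 [d1 x1] [k2 [d2 x2]] red1 red2 coord_eq.
rewrite (Yinterior_reduced red1) (Yinterior_reduced red2) => order_eq.
have k_eq : k1 = k2 by have := congr1 size order_eq; rewrite !size_codom !card_ord.
subst k2.
have s_eq : (sval d1).2 = (sval d2).2.
  apply/ffunP => j; have := congr1 (fun l => nth ((sval d1).2 j) l j) order_eq.
  by rewrite !codom_ffun !nth_fgraph_ord.
have x_eq : x1 = x2.
  apply: funext => j; rewrite -(Ycoord_order d1 x1) -(Ycoord_order d2 x2) -s_eq.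
  by rewrite [Ycoord _]coord_eq.
have f_eq : (sval d1).1 = (sval d2).1.
  apply/ffunP => a; have := congr1 (fun g => g a) coord_eq.
  have := Ycell_star d1 a; have := Ycell_star d2 a; rewrite -s_eq /=.
  case: ((sval d1).1 a) => [b1|]; case: ((sval d2).1 a) => [b2|] //=; try by move=> <-.
  by move=> _ _; case: b1; case: b2 => // /eqP; rewrite ?oner_eq0 // eq_sym oner_eq0.
have -> : d1 = d2 by apply: val_inj; apply: injective_projections.
by rewrite x_eq.
Qed.

Lemma real_eq_Yinvariants k1 (d1 : cell (Y A) k1) (x1 : 'I_k1 -> R)
    k2 (d2 : cell (Y A) k2) (x2 : 'I_k2 -> R) : in_cube x1 -> in_cube x2 ->
  Ycoord (mkpt d1 x1) = Ycoord (mkpt d2 x2) ->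
  Yinterior (mkpt d1 x1) = Yinterior (mkpt d2 x2) -> real_eq (mkpt d1 x1) (mkpt d2 x2).
Proof.
move=> /(real_eq_reduced d1) [r1 e1 red1] /(real_eq_reduced d2) [r2 e2 red2].
rewrite (Ycoord_real_eq e1) (Ycoord_real_eq e2) (Yinterior_real_eq e1) (Yinterior_real_eq e2).
move=> coord_eq int_eq; rewrite -(Yreduced_eq red1 red2 coord_eq int_eq) in e2.
by apply: rst_trans e1 _; exact: rst_sym.
Qed.

End YPoints.

Section Merge.
Variable T : eqType.
Implicit Types (x : T) (p q r : seq T).

Definition is_merge r p q := [/\ uniq r, r =i p ++ q, subseq p r & subseq q r].

Lemma is_mergeC r p q : is_merge r p q -> is_merge r q p.
Proof. by case=> ur mem_r pr qr; split=> // a; rewrite mem_r !mem_cat orbC. Qed.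

Lemma is_merge_cons x r p q : x \notin p -> x \notin q ->
  is_merge r p q -> is_merge (x :: r) (x :: p) q.
Proof.
move=> xp xq [ur mem_r pr qr]; have xr : x \notin r by rewrite mem_r mem_cat negb_or xp.
split; rewrite /= ?eqxx ?xr //; last exact: subseq_trans qr (subseq_cons r x).
by move=> a; rewrite !in_cons mem_r mem_cat orbA.
Qed.

Lemma is_merge_cons2 x r p q : x \notin p -> x \notin q ->
  is_merge r p q -> is_merge (x :: r) (x :: p) (x :: q).
Proof.
move=> xp xq [ur mem_r pr qr]; have xr : x \notin r by rewrite mem_r mem_cat negb_or xp.
split; rewrite /= ?eqxx ?xr //.
by move=> a; rewrite !in_cons mem_r !mem_cat in_cons; case: (a == x).
Qed.

Lemma filter_mem_consF x p q : x \notin p ->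
  [seq a <- p | a \in x :: q] = [seq a <- p | a \in q].
Proof.
move=> xp; apply: eq_in_filter => a ap.
by rewrite in_cons; case: eqP ap => // ->; rewrite (negbTE xp).
Qed.

Lemma common_order_cons x p q : x \notin q ->
  [seq a <- x :: p | a \in q] = [seq a <- q | a \in x :: p] ->
  [seq a <- p | a \in q] = [seq a <- q | a \in p].
Proof. by move=> xq /= /[!(negbTE xq)] ->; exact: filter_mem_consF. Qed.

Lemma merge_exists p q : uniq p -> uniq q ->
  [seq a <- p | a \in q] = [seq a <- q | a \in p] -> exists r, is_merge r p q.
Proof.
have [N] := ubnP (size p + size q); elim: N p q => // N IH p q.
case: p => [|x p] size_pq up uq; first by exists q; split; rewrite ?sub0seq.
case: q => [|y q] in size_pq uq *.
  by exists (x :: p); split; rewrite ?sub0seq ?cats0.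
have step x' p' q' : (size p' + size q' < N)%N -> x' \notin q' -> uniq (x' :: p') ->
    uniq q' -> [seq a <- x' :: p' | a \in q'] = [seq a <- q' | a \in x' :: p'] ->
    exists r, is_merge r (x' :: p') q'.
  move=> lt_N x'q' /andP [x'p' up'] uq' /(common_order_cons x'q') compat.
  by have [r mr] := IH _ _ lt_N up' uq' compat; exists (x' :: r); apply: is_merge_cons.
have [xq|xq] := boolP (x \notin y :: q); first by apply: step; rewrite // -ltnS.
have [yp|yp] := boolP (y \notin x :: p).
  move=> compat; have [|r mr] := step y q (x :: p) _ yp uq up (esym compat).
    by rewrite addnC -ltnS -addnS.
  by exists r; apply: is_mergeC.
rewrite !negbK in xq yp; case/andP: up => xp up; case/andP: uq => yq uq.
rewrite /= xq yp => -[exy compat]; subst y.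
have [||r mr] := IH p q _ up uq.
- by move: size_pq; rewrite /= addSn addnS !ltnS => /ltnW.
- by rewrite -(filter_mem_consF _ xp) compat (filter_mem_consF _ yq).
- by exists (x :: r); apply: is_merge_cons2.
Qed.

Lemma filter_subseq_uniq (P : pred T) p r : uniq r -> subseq p r -> {subset P <= p} ->
  [seq a <- r | P a] = [seq a <- p | P a].
Proof.
move=> ur /(subseq_uniqP ur) p_eq Pp; rewrite [in RHS]p_eq -filter_predI.
by apply: eq_filter => a /=; case: (boolP (P a)) => // /Pp ->.
Qed.

End Merge.

Section Subdivision.
Variables (R : realType) (tt : nat -> R).

Lemma subdiv_le m : (forall k, (k < m)%N -> tt k <= tt k.+1) ->
  forall k l, (k <= l <= m)%N -> tt k <= tt l.
Proof.
move=> tt_le k; elim=> [|l IH] /andP [kl lm]; first by rewrite leqn0 in kl; rewrite (eqP kl).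
move: kl; rewrite leq_eqVlt => /orP [/eqP -> //|kl].
by apply: le_trans (tt_le l lm); apply: IH; rewrite -ltnS kl ltnW.
Qed.

Lemma subdiv_piece m t : tt 0 <= t <= tt m.+1 ->
  exists2 k, (k < m.+1)%N & tt k <= t <= tt k.+1.
Proof.
elim: m => [|m IH] /andP [t0 tm]; first by exists 0%N; rewrite ?t0.
have [t_le|t_gt] := leP t (tt m.+1); last by exists m.+1; rewrite ?(ltW t_gt).
by have [|k km tk] := IH; [rewrite t0 | exists k; first exact: ltnW].
Qed.

Lemma subdiv_mono m (f : R -> R) :
  (forall k, (k < m.+1)%N -> forall s t, tt k <= s -> s <= t -> t <= tt k.+1 -> f s <= f t) ->
  forall s t, tt 0 <= s -> s <= t -> t <= tt m.+1 -> f s <= f t.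
Proof.
elim: m => [|m IH] f_mono s t s0 st tm; first exact: (f_mono 0%N).
have IH' := IH (fun k km => f_mono k (ltnW km)).
have [t_le|t_gt] := leP t (tt m.+1); first exact: IH'.
have [s_le|s_gt] := leP s (tt m.+1); last by apply: (f_mono m.+1) => //; exact: ltW.
apply: (@le_trans _ _ (f (tt m.+1))); first exact: IH'.
by apply: (f_mono m.+1) => //; exact: ltW.
Qed.

Lemma subdiv_continuous m (f : R -> R) :
  (forall k, (k < m.+1)%N -> {within `[tt k, tt k.+1], continuous f}) ->
  {within `[tt 0, tt m.+1], continuous f}.
Proof.
elim: m => [|m IH] f_cont; first exact: (f_cont 0%N).
apply: (@continuous_subspaceW _ _ _ (`[tt 0, tt m.+1] `|` `[tt m.+1, tt m.+2])).
  move=> t /=; rewrite !in_itv /= => /andP [t0 tm].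
  by case: (leP t (tt m.+1)) => [_|/ltW t_ge]; [left|right]; rewrite ?t0 ?t_ge ?tm.
apply: withinU_continuous; [exact: interval_closed|exact: interval_closed| |exact: f_cont].
by apply: IH => k /ltnW; exact: f_cont.
Qed.

End Subdivision.

Section GlobalOrder.
Variables (R : realType) (A : finType) (m : nat) (tt : nat -> R).
Variables (G : R -> A -> R) (Loc : R -> seq A) (ls : nat -> seq A).
Hypothesis tt_le : forall k, (k < m)%N -> tt k <= tt k.+1.
Hypothesis G_start : forall a, G (tt 0) a = 0.
Hypothesis G_mono : forall s t a, tt 0 <= s -> s <= t -> t <= tt m -> G s a <= G t a.
Hypothesis ls_uniq : forall k, uniq (ls k).
Hypothesis Loc_start : Loc (tt 0) = [::].
Hypothesis Loc_piece : forall k, (k < m)%N -> forall t, tt k <= t <= tt k.+1 ->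
  Loc t = [seq a <- ls k | inner (G t) a].
Hypothesis inner_ls : forall k, (k < m)%N -> forall t a, tt k <= t <= tt k.+1 ->
  inner (G t) a -> a \in ls k.
Hypothesis G_const : forall k, (k < m)%N -> forall a, a \notin ls k -> G (tt k) a = G (tt k.+1) a.

Let orders_upto k L := [/\ uniq L, forall a, (a \in L) = (0 < G (tt k) a) &
  forall t, tt 0 <= t <= tt k -> [seq a <- L | inner (G t) a] = Loc t].

Let orders_upto0 : orders_upto 0 [::].
Proof.
split=> // [a|t]; first by rewrite G_start ltxx.
by rewrite -eq_le => /eqP <-; rewrite Loc_start.
Qed.

Let tt_ge0 k : (k <= m)%N -> tt 0 <= tt k.
Proof. by move=> km; apply: (subdiv_le tt_le). Qed.

Let tt_lem k : (k <= m)%N -> tt k <= tt m.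
Proof. by move=> km; apply: (subdiv_le tt_le); rewrite km leqnn. Qed.

Let G_ge0 t a : tt 0 <= t -> t <= tt m -> 0 <= G t a.
Proof. by move=> t0 tm; rewrite -(G_start a) G_mono. Qed.

Let active k := [seq a <- ls k | (G (tt k) a < 1) && (0 < G (tt k.+1) a)].

Let inner_active k t a : (k < m)%N -> tt k <= t <= tt k.+1 -> inner (G t) a -> a \in active k.
Proof.
move=> km /[dup] t_in /andP [kt tk] /[dup] inner_t /andP [t0 t1].
rewrite mem_filter (inner_ls km t_in inner_t) andbT.
rewrite (le_lt_trans (G_mono _ (tt_ge0 (ltnW km)) kt (le_trans tk (tt_lem km))) t1).
by rewrite (lt_le_trans t0 (G_mono _ (le_trans (tt_ge0 (ltnW km)) kt) tk (tt_lem km))).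
Qed.

Let active_compat k L : (k < m)%N -> orders_upto k L ->
  [seq a <- L | a \in active k] = [seq a <- active k | a \in L].
Proof.
move=> km [_ mem_L Loc_L]; have tk0 := tt_ge0 (ltnW km); have tkk := tt_le km.
have G_mono_k a : 0 < G (tt k) a -> 0 < G (tt k.+1) a.
  by move/lt_le_trans; apply; rewrite G_mono ?tt_lem.
have -> : [seq a <- L | a \in active k] = Loc (tt k).
  rewrite -Loc_L ?tk0 ?lexx //; apply: eq_in_filter => a; rewrite mem_L => Gk0.
  apply/idP/idP => [|/inner_active -> //]; last by rewrite lexx.
  by rewrite mem_filter /inner Gk0 => /andP [/andP [->]].
rewrite (Loc_piece km) ?lexx // -filter_predI; apply: eq_filter => a /=.
rewrite mem_L /inner; case: (boolP (0 < G (tt k) a)) => //= /G_mono_k ->.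
by rewrite andbT.
Qed.

Let orders_upto_step k L : (k < m)%N -> orders_upto k L -> exists r, orders_upto k.+1 r.
Proof.
move=> km /[dup] L_k [uL mem_L Loc_L].
have tk0 := tt_ge0 (ltnW km); have tkk := tt_le km; have tk1m := tt_lem km.
have [r [ur mem_r Lr qr]] := merge_exists uL (filter_uniq _ (ls_uniq k)) (active_compat km L_k).
exists r; split=> // [a|t /andP [t0 tk1]].
  rewrite mem_r mem_cat mem_L mem_filter; case: (boolP (0 < G (tt k) a)) => /= [Gk0|].
    by rewrite (lt_le_trans Gk0 (G_mono _ tk0 tkk tk1m)).
  rewrite -leNgt => Gk_le0.
  have Gk0 : G (tt k) a = 0 by apply/eqP; rewrite eq_le Gk_le0 G_ge0 // (le_trans tkk tk1m).
  have [_|a_out] := boolP (a \in ls k); first by rewrite Gk0 ltr01 andbT.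
  by rewrite -(G_const km a_out) Gk0 ltxx !andbF.
have [tk|/ltW kt] := leP t (tt k).
  rewrite (filter_subseq_uniq ur Lr) ?Loc_L ?t0 // => a /andP [Gt0 _].
  by rewrite mem_L (lt_le_trans Gt0 (G_mono _ t0 tk (le_trans tkk tk1m))).
have t_in : tt k <= t <= tt k.+1 by rewrite kt.
rewrite (filter_subseq_uniq ur qr) => [|a]; last exact: inner_active.
rewrite (Loc_piece km t_in) -(filter_subseq_uniq (ls_uniq k) (filter_subseq _ _)) // => a.
exact: inner_active.
Qed.

Lemma global_order : exists L, [/\ uniq L, forall a, (a \in L) = (0 < G (tt m) a) &
  forall t, tt 0 <= t <= tt m -> [seq a <- L | inner (G t) a] = Loc t].
Proof.
suff upto k : (k <= m)%N -> exists L, orders_upto k L by have [L] := upto m (leqnn m); exists L.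
elim: k => [|k IH] km; first by exists [::].
by have [L /(orders_upto_step km)] := IH (ltnW km).
Qed.

End GlobalOrder.

Lemma Ycube_exists (A : finType) n (L : seq A) : uniq L -> (forall a, a \in L) -> #|A| = n ->
  exists c : cell (Y A) n, codom (sval c).2 = L.
Proof.
move=> uL allL cardA.
have sizeL : size L == n.
  apply/eqP; rewrite -cardA cardE -(perm_size (uniq_perm uL (enum_uniq A) _)) // => a.
  by rewrite mem_enum allL.
pose s := [ffun j => tnth (Tuple sizeL) j].
have codom_s : codom s = L.
  by rewrite codomE -[RHS](map_tnth_enum (Tuple sizeL)); apply: eq_map => j; rewrite ffunE.
have valid : Yvalid ([ffun => None], s).
  rewrite /Yvalid /injectiveb /dinjectiveb -codomE codom_s uL; apply/forallP => a.
  by rewrite ffunE /= allL.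
by exists (exist (fun p => is_true (Yvalid p)) _ valid).
Qed.

Lemma Ycoord_full (R : realType) (A : finType) k (d : cell (Y A) k) (g : A -> R) :
  (forall a, a \in codom (sval d).2) -> Ycoord (mkpt d (fun j => g ((sval d).2 j))) = g.
Proof.
by move=> all_d; apply: funext => a; have /codomP [j ->] := all_d a; rewrite Ycoord_order.
Qed.

Section YDPath.
Variables (R : realType) (A : finType) (alpha : R -> pt R (Y A)).
Variables (m : nat) (tt : nat -> R) (ns : nat -> nat).
Variables (cs : forall k, cell (Y A) (ns k)) (bs : forall k, R -> 'I_(ns k) -> R).
Arguments bs : clear implicits.
Hypotheses (tt0 : tt 0 = 0) (ttm : tt m.+1 = 1).
Hypothesis tt_lt : forall k, (k < m.+1)%N -> tt k < tt k.+1.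
Hypothesis pieces : forall k, (k < m.+1)%N ->
  [/\ (forall j, {within `[tt k, tt k.+1], continuous (fun t => bs k t j)}),
      (forall j s t, tt k <= s -> s <= t -> t <= tt k.+1 -> bs k s j <= bs k t j),
      (forall t, tt k <= t <= tt k.+1 -> in_cube (bs k t)) &
      (forall t, tt k <= t <= tt k.+1 -> real_eq (alpha t) (mkpt (cs k) (bs k t)))].
Hypothesis alpha0 : real_eq (alpha 0) (mkpt (Y0 A) (fun _ => 0)).
Hypothesis alpha1 : real_eq (alpha 1) (mkpt (Y1 A) (fun _ => 0)).

Let ls k := codom (sval (cs k)).2.

Lemma Ycoord_dpath_piece k : (k < m.+1)%N -> forall t, tt k <= t <= tt k.+1 ->
  Ycoord (alpha t) = Ycoord (mkpt (cs k) (bs k t)).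
Proof. by move=> km t t_in; have [_ _ _ /(_ t t_in) /Ycoord_real_eq] := pieces km. Qed.

Lemma Yinterior_dpath_piece k : (k < m.+1)%N -> forall t, tt k <= t <= tt k.+1 ->
  Yinterior (alpha t) = [seq a <- ls k | inner (Ycoord (alpha t)) a].
Proof.
move=> km t t_in; rewrite (Ycoord_dpath_piece km t_in).
by have [_ _ _ /(_ t t_in) /Yinterior_real_eq] := pieces km.
Qed.

Lemma dpath_piece t : 0 <= t <= 1 -> exists2 k, (k < m.+1)%N & tt k <= t <= tt k.+1.
Proof. by rewrite -tt0 -ttm; exact: subdiv_piece. Qed.

Lemma Ycoord_dpath_in01 t a : 0 <= t <= 1 -> 0 <= Ycoord (alpha t) a <= 1.
Proof.
move=> /dpath_piece [k km t_in]; rewrite (Ycoord_dpath_piece km t_in).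
by apply: Ycoord_in01; have [_ _ /(_ t t_in)] := pieces km.
Qed.

Lemma Ycoord_dpath_mono a s t : 0 <= s -> s <= t -> t <= 1 ->
  Ycoord (alpha s) a <= Ycoord (alpha t) a.
Proof.
rewrite -tt0 -ttm; apply: (subdiv_mono (f := fun t => Ycoord (alpha t) a)) => k km {}s {}t ks st tk.
have s_in : tt k <= s <= tt k.+1 by rewrite ks (le_trans st tk).
have t_in : tt k <= t <= tt k.+1 by rewrite tk (le_trans ks st).
rewrite /= (Ycoord_dpath_piece km s_in) (Ycoord_dpath_piece km t_in).
have [/codomP [j ->]|a_out] := boolP (a \in ls k).
  by rewrite !Ycoord_order; have [_ bs_mono _ _] := pieces km; exact: bs_mono.
by have [b coord_b] := Ycoord_notin_order R a_out; rewrite !coord_b.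
Qed.

Lemma Ycoord_dpath_cont a : {within `[0, 1], continuous (fun t => Ycoord (alpha t) a)}.
Proof.
rewrite -tt0 -ttm; apply: subdiv_continuous => k km.
suff [f f_cont f_eq] : exists2 f : R -> R, {within `[tt k, tt k.+1], continuous f} &
    forall t, tt k <= t <= tt k.+1 -> f t = Ycoord (alpha t) a.
  by apply: (subspace_eq_continuous _ f_cont) => t; rewrite inE /= in_itv /=; exact: f_eq.
have [/codomP [j a_j]|a_out] := boolP (a \in ls k).
  have [bs_cont _ _ _] := pieces km; exists (fun t => bs k t j) => // t t_in.
  by rewrite (Ycoord_dpath_piece km t_in) a_j Ycoord_order.
have [b coord_b] := Ycoord_notin_order R a_out.
exists (fun=> b%:R) => [|t t_in]; first exact: cst_continuous.
by rewrite (Ycoord_dpath_piece km t_in) coord_b.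
Qed.

Lemma Ycoord_dpath0 : Ycoord (alpha 0) = fun=> 0.
Proof. by rewrite (Ycoord_real_eq alpha0) Ycoord_vertex. Qed.

Lemma Ycoord_dpath1 : Ycoord (alpha 1) = fun=> 1.
Proof. by rewrite (Ycoord_real_eq alpha1) Ycoord_vertex. Qed.

Lemma dpath_order : exists L, [/\ uniq L, forall a, a \in L &
  forall t, 0 <= t <= 1 -> Yinterior (alpha t) = [seq a <- L | inner (Ycoord (alpha t)) a]].
Proof.
have tt_le k : (k < m.+1)%N -> tt k <= tt k.+1 by move/tt_lt/ltW.
have G_start a : Ycoord (alpha (tt 0)) a = 0 by rewrite tt0 Ycoord_dpath0.
have G_mono s t a : tt 0 <= s -> s <= t -> t <= tt m.+1 -> Ycoord (alpha s) a <= Ycoord (alpha t) a.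
  by rewrite tt0 ttm; exact: Ycoord_dpath_mono.
have Loc_start : Yinterior (alpha (tt 0)) = [::].
  by rewrite tt0 (Yinterior_real_eq alpha0) Yinterior_vertex.
have inner_ls k (km : (k < m.+1)%N) t a : tt k <= t <= tt k.+1 ->
    inner (Ycoord (alpha t)) a -> a \in ls k.
  by move=> t_in; rewrite (Ycoord_dpath_piece km t_in); exact: inner_Yorder.
have G_const k (km : (k < m.+1)%N) a : a \notin ls k ->
    Ycoord (alpha (tt k)) a = Ycoord (alpha (tt k.+1)) a.
  move=> /(Ycoord_notin_order R) [b coord_b]; have tkk := tt_le k km.
  by rewrite !(Ycoord_dpath_piece km) ?coord_b ?lexx ?tkk.
have [L [uL mem_L int_L]] := global_order tt_le G_start G_mono (fun k => Ycell_uniq (cs k))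
  Loc_start Yinterior_dpath_piece inner_ls G_const.
exists L; split=> [//|a|t t01]; first by rewrite mem_L ttm Ycoord_dpath1 ltr01.
by rewrite int_L // tt0 ttm.
Qed.

Lemma dpath_real_eq t k (d : cell (Y A) k) (x : 'I_k -> R) : 0 <= t <= 1 -> in_cube x ->
  Ycoord (mkpt d x) = Ycoord (alpha t) -> Yinterior (mkpt d x) = Yinterior (alpha t) ->
  real_eq (alpha t) (mkpt d x).
Proof.
move=> /dpath_piece [j jm t_in] x01; have [_ _ /(_ t t_in) cube_j /(_ t t_in) alpha_j] := pieces jm.
rewrite (Ycoord_real_eq alpha_j) (Yinterior_real_eq alpha_j) => coord_eq int_eq.
by apply: rst_trans alpha_j _; apply: real_eq_Yinvariants.
Qed.

End YDPath.

Theorem proposition3p3 (R : realType) (A : finType) (n : nat) (hA : #|A| = n)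
  (alpha : R -> pt R (Y A)) :
  dpath_from_to (Y0 A) (Y1 A) alpha ->
  exists (c : cell (Y A) n) (beta : R -> 'I_n -> R),
    [/\ (forall j, {within `[0, 1], continuous (fun t => beta t j)}),
        (forall j s t, 0 <= s -> s <= t -> t <= 1 -> beta s j <= beta t j),
        (forall t, 0 <= t <= 1 -> in_cube (beta t)),
        (forall j, beta 0 j = 0 /\ beta 1 j = 1) &
        (forall t, 0 <= t <= 1 -> real_eq (alpha t) (mkpt c (beta t)))].
Proof.
case=> -[m [tt [ns [cs [bs [tt0 ttm tt_lt pieces]]]]]] alpha0 alpha1.
case: m => [|m] in ttm tt_lt pieces *; first by move/eqP: ttm; rewrite tt0 eq_sym oner_eq0.
have [L [uL allL int_L]] := dpath_order tt0 ttm tt_lt pieces alpha0 alpha1.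
have [c order_c] := Ycube_exists uL allL hA.
have all_c a : a \in codom (sval c).2 by rewrite order_c.
pose beta t j := Ycoord (alpha t) ((sval c).2 j).
have beta01 t : 0 <= t <= 1 -> in_cube (beta t).
  by move=> t01 j; exact: (Ycoord_dpath_in01 tt0 ttm pieces).
exists c, beta; split=> [j|j s t|//|j|t t01].
- exact: (Ycoord_dpath_cont tt0 ttm pieces).
- exact: (Ycoord_dpath_mono tt0 ttm pieces).
- by rewrite /beta (Ycoord_dpath0 alpha0) (Ycoord_dpath1 alpha1).
apply: (dpath_real_eq tt0 ttm pieces) => //; first exact: beta01.
  exact: Ycoord_full.
by rewrite int_L // /Yinterior Ycoord_full //= order_c.
Qed.
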